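(* Let $(\mathcal L,S,\pi_0,\pi_1,\sigma)$ be a summable category with flip $c$. For $l\in\mathbb N$ and an object $X$ define $c^{(l)}_X\in\mathcal L(S^{l+2}X,S^{l+2}X)$ by $c^{(0)}_X=c_X$ and $c^{(l+1)}_X=c_{S^{l+1}X}\circ S(c^{(l)}_X)$. Then for all $i_0,\dots,i_{l+1}\in\{0,1\}$, $$\pi_{i_{l+1}}\circ\cdots\circ\pi_{i_0}\circ c^{(l)}_X=\pi_{i_0}\circ\pi_{i_{l+1}}\circ\cdots\circ\pi_{i_1}$$ as morphisms $S^{l+2}X\to X$ (each $\pi_i$ taken at the appropriate object).
   Context: A summable category consists of a category $\mathcal L$ with zero morphisms, a functor $S:\mathcal L\to\mathcal L$ and natural transformations $\pi_0,\pi_1,\sigma:S\Rightarrow\mathrm{Id}$ with $\pi_0,\pi_1$ jointly monic, satisfying the axioms of summable categories of Ehrhard's coherent differentiation. These axioms guarantee the existence of a natural transformation $c:S^2\Rightarrow S^2$ (the flip) uniquely characterised by $\pi_i\circ\pi_j\circ c_X=\pi_j\circ\pi_i$ for all $i,j\in\{0,1\}$. *)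

From Stdlib Require Import Arith.

Set Implicit Arguments.

Record Category := {
  Ob :> Type;
  Hom : Ob -> Ob -> Type;
  idm : forall X, Hom X X;
  comp : forall X Y Z, Hom Y Z -> Hom X Y -> Hom X Z;
  comp_id_l : forall X Y (f : Hom X Y), comp (idm Y) f = f;
  comp_id_r : forall X Y (f : Hom X Y), comp f (idm X) = f;
  comp_assoc : forall X Y Z W (h : Hom Z W) (g : Hom Y Z) (f : Hom X Y),
      comp h (comp g f) = comp (comp h g) f
}.

Arguments Hom {c} X Y : rename.
Arguments idm {C} X : rename.
Arguments comp {C X Y Z} g f : rename.

(** Pre-summable structure: a category with zero morphisms, an endofunctor S
    and natural transformations pi_0, pi_1, sigma : S => Id with pi_0, pi_1
    jointly monic.  pi false = pi_0, pi true = pi_1. *)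
Record PreSummableCat := {
  cat :> Category;
  zero : forall X Y : cat, Hom X Y;
  zero_comp_l : forall X Y Z (g : Hom Y Z), comp g (zero X Y) = zero X Z;
  zero_comp_r : forall X Y Z (f : Hom X Y), comp (zero Y Z) f = zero X Z;
  So : cat -> cat;
  Sm : forall X Y : cat, Hom X Y -> Hom (So X) (So Y);
  Sm_id : forall X, Sm _ _ (idm X) = idm (So X);
  Sm_comp : forall X Y Z (g : Hom Y Z) (f : Hom X Y),
      Sm _ _ (comp g f) = comp (Sm _ _ g) (Sm _ _ f);
  pi : bool -> forall X : cat, Hom (So X) X;
  pi_nat : forall b X Y (f : Hom X Y), comp f (pi b X) = comp (pi b Y) (Sm _ _ f);
  sigma : forall X : cat, Hom (So X) X;
  sigma_nat : forall X Y (f : Hom X Y), comp f (sigma X) = comp (sigma Y) (Sm _ _ f);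
  pi_jointly_monic : forall X Y (f g : Hom Y (So X)),
      comp (pi false X) f = comp (pi false X) g ->
      comp (pi true X) f = comp (pi true X) g -> f = g
}.

Arguments Sm {p X Y} f : rename.
Arguments pi {p} b X : rename.

Section Iter.
Variable L : PreSummableCat.

Fixpoint Sn (n : nat) (X : L) : L :=
  match n with 0 => X | S n => So L (Sn n X) end.

Definition is_flip (c : forall X : L, Hom (So L (So L X)) (So L (So L X))) : Prop :=
  (forall X Y (f : Hom X Y), comp (Sm (Sm f)) (c X) = comp (c Y) (Sm (Sm f))) /\
  (forall (X : L) (i j : bool),
      comp (pi i X) (comp (pi j (So L X)) (c X)) = comp (pi j X) (pi i (So L X))).

Fixpoint cl (c : forall X : L, Hom (So L (So L X)) (So L (So L X))) (l : nat) (X : L)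
  : Hom (Sn (S (S l)) X) (Sn (S (S l)) X) :=
  match l with
  | 0 => c X
  | S l' => comp (c (Sn (S l') X)) (Sm (cl c l' X))
  end.

(** pis n i X = pi_{i(n-1)} o ... o pi_{i 1} o pi_{i 0} : S^n X -> X,
    where pi_{i 0} is taken at S^(n-1) X, ..., pi_{i(n-1)} at X. *)
Fixpoint pis (n : nat) (i : nat -> bool) (X : L) : Hom (Sn n X) X :=
  match n with
  | 0 => idm X
  | S n' => comp (pis n' (fun k => i (S k)) X) (pi (i 0) (Sn n' X))
  end.
End Iter.
Arguments Sn {L} n X.
Arguments is_flip {L} c.
Arguments cl {L} c l X.
Arguments pis {L} n i X.

(** rotate n i = (i 1, i 2, ..., i n, i 0, ...): the sequence of indices
    in order of application for pi_{i_0} o pi_{i_n} o ... o pi_{i_1}. *)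
Definition rotate (n : nat) (i : nat -> bool) (k : nat) : bool :=
  if Nat.eqb k n then i 0 else i (S k).


(* Post-composing [c^(l+1) = c o S(c^(l))] with a string of projections, the
   flip first exchanges the two outermost indices; naturality of the
   projections then pushes [S(c^(l))] past the outermost projection, where
   the induction hypothesis rotates the remaining [l+2] indices. *)

Definition shift (i : nat -> bool) : nat -> bool := fun k => i (S k).

Definition swap01 (i : nat -> bool) : nat -> bool :=
  fun k => match k with 0 => i 1 | 1 => i 0 | _ => i k end.

Lemma rotate_S_shift (n : nat) (i : nat -> bool) :
  shift (rotate (S n) i) = rotate n (shift (swap01 i)).
Proof. reflexivity. Qed.

Section Projections.
Variable L : PreSummableCat.

Lemma pis_Sm (n : nat) (i : nat -> bool) (X : L) (f : Hom (Sn n X) (Sn n X)) :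
  comp (pis (S n) i X) (Sm f) = comp (comp (pis n (shift i) X) f) (pi (i 0) (Sn n X)).
Proof.
  simpl. rewrite <- !comp_assoc, <- pi_nat. reflexivity.
Qed.

Variable c : forall X : L, Hom (So L (So L X)) (So L (So L X)).
Hypothesis pi_pi_flip : forall (X : L) (i j : bool),
  comp (pi i X) (comp (pi j (So L X)) (c X)) = comp (pi j X) (pi i (So L X)).

Lemma pis_flip (n : nat) (i : nat -> bool) (X : L) :
  comp (pis (S (S n)) i X) (c (Sn n X)) = pis (S (S n)) (swap01 i) X.
Proof.
  simpl. rewrite <- !comp_assoc, pi_pi_flip. reflexivity.
Qed.

Lemma pis_cl (l : nat) (X : L) (i : nat -> bool) :
  comp (pis (S (S l)) i X) (cl c l X) = pis (S (S l)) (rotate (S l) i) X.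
Proof.
  revert i; induction l as [|l IH]; intro i.
  - apply pis_flip.
  - change (cl c (S l) X) with (comp (c (Sn (S l) X)) (Sm (cl c l X))).
    rewrite comp_assoc, pis_flip, pis_Sm, IH, <- rotate_S_shift.
    reflexivity.
Qed.

End Projections.

Theorem mainTheorem2 (L : PreSummableCat)
  (c : forall X : L, Hom (So L (So L X)) (So L (So L X)))
  (Hc : is_flip c) (l : nat) (X : L) (i : nat -> bool) :
  comp (pis (S (S l)) i X) (cl c l X) = pis (S (S l)) (rotate (S l) i) X.
Proof.
  exact (@pis_cl L c (proj2 Hc) l X i).
Qed.
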